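(* Let $U,V$ be nonempty sets, $A,A^*$ fuzzy subsets of $U$ and $B$ a fuzzy subset of $V$. Let $\odot$ be a semi-overlap function having $1$ as neutral element and let $\rightarrow$ be its residual implication, $a\rightarrow b=\sup\{w\in[0,1]\mid a\odot w\le b\}$. Then the FMP-solution $B^*$ of the quintuple implication principle exists and is given, for every $v\in V$, by $$B^*(v)=\sup_{u\in U}\big\{A^*(u)\odot[(A^*(u)\rightarrow A(u))\odot(A(u)\rightarrow B(v))]\big\}.$$
   Context: A semi-overlap function is a function $\odot:[0,1]^2\to[0,1]$ such that for all $u,v\in[0,1]$: $u\odot v=v\odot u$; if $uv=0$ then $u\odot v=0$; if $uv=1$ then $u\odot v=1$; $\odot$ is increasing in each variable; and $\odot$ is left-continuous: $u\odot\sup_{i\in I}v_i=\sup_{i\in I}(u\odot v_i)$ for every $u$ and nonempty family $\{v_i\}_{i\in I}\subseteq[0,1]$. $1$ is a neutral element if $1\odot v=v$ for all $v$. A fuzzy subset of $U$ is a function $U\to[0,1]$; fuzzy subsets are ordered pointwise. Given $A,A^*$ on $U$ and $B$ on $V$, the FMP-solution of the quintuple implication principle is the minimum fuzzy subset $B^*$ of $V$ (with respect to the pointwise order) such that for all $u\in U,v\in V$, $$(A(u)\rightarrow B(v))\rightarrow\big((A^*(u)\rightarrow A(u))\rightarrow(A^*(u)\rightarrow B^*(v))\big)=1.$$ *)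

From mathcomp Require Import all_boot all_order all_algebra.
From mathcomp Require Import all_classical all_reals.
Set Implicit Arguments. Unset Strict Implicit. Unset Printing Implicit Defensive.
Import Order.TTheory GRing.Theory Num.Theory.
Local Open Scope classical_set_scope.
Local Open Scope ring_scope.

Section Defs.
Variable R : realType.

Definition unitI (x : R) : Prop := 0 <= x <= 1.

(* A semi-overlap function, viewed as a binary operation on R restricted to [0,1]. *)
Definition semi_overlap (O : R -> R -> R) : Prop :=
  (forall u v, unitI u -> unitI v -> unitI (O u v)) /\
  (forall u v, unitI u -> unitI v -> O u v = O v u) /\
  (forall u v, unitI u -> unitI v -> u * v = 0 -> O u v = 0) /\
  (forall u v, unitI u -> unitI v -> u * v = 1 -> O u v = 1) /\
  (forall u v w, unitI u -> unitI v -> unitI w -> v <= w ->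
      O u v <= O u w /\ O v u <= O w u) /\
      (forall u (I : Type) (v : I -> R), unitI u -> (exists i : I, True) ->
          (forall i, unitI (v i)) ->
          O u (sup (range v)) = sup (range (fun i => O u (v i)))).

Definition one_neutral (O : R -> R -> R) : Prop :=
  forall v, unitI v -> O 1 v = v.

Definition res_imp (O : R -> R -> R) (a b : R) : R :=
  sup [set w | unitI w /\ O a w <= b].

Definition fuzzy_subset (X : Type) (F : X -> R) : Prop := forall x, unitI (F x).

Definition QIP_FMP_condition (U V : Type) (imp : R -> R -> R)
    (A As : U -> R) (B Bs : V -> R) : Prop :=
  forall u v,
    imp (imp (A u) (B v)) (imp (imp (As u) (A u)) (imp (As u) (Bs v))) = 1.

Definition is_FMP_solution (U V : Type) (imp : R -> R -> R)
    (A As : U -> R) (B Bs : V -> R) : Prop :=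
  [/\ fuzzy_subset Bs,
      QIP_FMP_condition imp A As B Bs &
      forall C : V -> R, fuzzy_subset C -> QIP_FMP_condition imp A As B C ->
        forall v, Bs v <= C v].

End Defs.

From mathcomp Require Import all_boot all_order all_algebra.
From mathcomp Require Import all_classical all_reals.
Import Order.TTheory GRing.Theory Num.Theory.
Local Open Scope classical_set_scope.
Local Open Scope ring_scope.

(* Since 1 is neutral, [a -> b = 1] iff [a <= b], and
   left-continuity makes [->] the residuum of the semi-overlap:
   [a (.) w <= b] iff [w <= a -> b].  Peeling off the three implications of
   the quintuple condition with these two facts turns it into
   [As u (.) ((As u -> A u) (.) (A u -> B v)) <= B* v] for every [u], whose
   least solution is the pointwise supremum over [u]. *)

Set Implicit Arguments.
Unset Strict Implicit.

Section UnitInterval.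
Context {R : realType}.

Lemma unitI0 : unitI (0 : R).
Proof. by rewrite /unitI lexx ler01. Qed.

Lemma unitI1 : unitI (1 : R).
Proof. by rewrite /unitI lexx ler01. Qed.

Lemma has_sup_range_unitI (I : Type) (F : I -> R) (i0 : I) :
  (forall i, unitI (F i)) -> has_sup (range F).
Proof.
move=> FI; split; first by exists (F i0), i0.
by exists 1 => _ [i _ <-]; case/andP: (FI i).
Qed.

Lemma sup_range_unitI (I : Type) (F : I -> R) (i0 : I) :
  (forall i, unitI (F i)) -> unitI (sup (range F)).
Proof.
move=> FI; have supF := has_sup_range_unitI i0 FI.
apply/andP; split.
  by apply: le_trans (sup_upper_bound supF (imageT F i0)); case/andP: (FI i0).
by apply: ge_sup => [|_ [i _ <-]]; [case: supF | case/andP: (FI i)].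
Qed.

End UnitInterval.

Section SemiOverlap.
Variable R : realType.
Variable O : R -> R -> R.
Hypothesis hO : semi_overlap O.

Lemma semi_overlap_unitI u v : unitI u -> unitI v -> unitI (O u v).
Proof. by case: hO => H _; apply: H. Qed.

Lemma semi_overlapC u v : unitI u -> unitI v -> O u v = O v u.
Proof. by case: hO => _ [H _]; apply: H. Qed.

Lemma semi_overlap_ler u v w :
  unitI u -> unitI v -> unitI w -> v <= w -> O u v <= O u w.
Proof. by case: hO => _ [_ [_ [_ [H _]]]] uI vI wI vw; case: (H u v w). Qed.

Lemma semi_overlap_sup u (I : Type) (v : I -> R) : unitI u ->
  (exists i : I, True) -> (forall i, unitI (v i)) ->
  O u (sup (range v)) = sup (range (fun i => O u (v i))).
Proof. by case: hO => _ [_ [_ [_ [_ H]]]]; apply: H. Qed.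

Lemma semi_overlapx0 a : unitI a -> O a 0 = 0.
Proof.
by case: hO => _ [_ [H _]] aI; apply: H => //; [exact: unitI0 | rewrite mulr0].
Qed.

Lemma res_imp_set0 a b : unitI a -> unitI b -> unitI (0 : R) /\ O a 0 <= b.
Proof. by move=> aI /andP[b0 _]; rewrite semi_overlapx0 //; split=> //; exact: unitI0. Qed.

Lemma has_sup_res_imp_set a b : unitI a -> unitI b ->
  has_sup [set w | unitI w /\ O a w <= b].
Proof.
move=> aI bI; split; first by exists 0; exact: res_imp_set0.
by exists 1 => w [/andP[]].
Qed.

Lemma res_imp_ge a b w : unitI a -> unitI b -> unitI w -> O a w <= b ->
  w <= res_imp O a b.
Proof.
by move=> aI bI wI awb; exact: sup_upper_bound (has_sup_res_imp_set aI bI) w (conj wI awb).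
Qed.

Lemma res_imp_unitI a b : unitI a -> unitI b -> unitI (res_imp O a b).
Proof.
move=> aI bI; apply/andP; split.
  by case: (res_imp_set0 aI bI) => ? ?; apply: res_imp_ge.
by apply: ge_sup; [case: (has_sup_res_imp_set aI bI) | move=> w [/andP[]]].
Qed.

(* Left-continuity, applied to the family of all [w] with [a (.) w <= b]
   indexed by their sigma type. *)
Lemma semi_overlap_res_imp a b : unitI a -> unitI b -> O a (res_imp O a b) <= b.
Proof.
move=> aI bI.
pose W := {w : R | unitI w /\ O a w <= b}.
pose w0 : W := exist _ 0 (res_imp_set0 aI bI).
have -> : res_imp O a b = sup (range (fun w : W => sval w)).
  congr sup; rewrite predeqE => x; split; first by move=> xW; exists (exist _ x xW).
  by case=> [[y yW]] _ <-.
rewrite semi_overlap_sup //; last by move=> w; case: (svalP w).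
apply: ge_sup => [|_ [w _ <-]]; first by exists (O a (sval w0)), w0.
by case: (svalP w).
Qed.

Lemma res_impP a b w : unitI a -> unitI b -> unitI w ->
  O a w <= b <-> w <= res_imp O a b.
Proof.
move=> aI bI wI; split; first exact: res_imp_ge.
move=> w_le; apply: le_trans (semi_overlap_res_imp aI bI).
by apply: semi_overlap_ler => //; exact: res_imp_unitI.
Qed.

Hypothesis hN : one_neutral O.

Lemma res_imp_eq1 a b : unitI a -> unitI b -> res_imp O a b = 1 <-> a <= b.
Proof.
move=> aI bI.
have -> : a <= b <-> 1 <= res_imp O a b.
  by rewrite -(res_impP aI bI unitI1) semi_overlapC ?hN //; exact: unitI1.
case/andP: (res_imp_unitI aI bI) => _ le1; split => [-> //|ge1].
by apply/eqP; rewrite eq_le le1 ge1.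
Qed.

Lemma res_imp_curry_eq1 a c x y :
  unitI a -> unitI c -> unitI x -> unitI y ->
  res_imp O x (res_imp O y (res_imp O a c)) = 1 <-> O a (O y x) <= c.
Proof.
move=> aI cI xI yI.
have acI := res_imp_unitI aI cI.
rewrite res_imp_eq1 //; last exact: res_imp_unitI.
rewrite -res_impP // -res_impP //; exact: semi_overlap_unitI.
Qed.

End SemiOverlap.

Theorem theorem4p2 (R : realType) (U V : Type) (u0 : U) (v0 : V)
    (O : R -> R -> R) (A As : U -> R) (B : V -> R) :
  semi_overlap O -> one_neutral O ->
  fuzzy_subset A -> fuzzy_subset As -> fuzzy_subset B ->
  is_FMP_solution (res_imp O) A As B
    (fun v => sup (range (fun u =>
        O (As u) (O (res_imp O (As u) (A u)) (res_imp O (A u) (B v)))))).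
Proof.
move=> hO hN AI AsI BI.
set T := fun u v => O (As u) (O (res_imp O (As u) (A u)) (res_imp O (A u) (B v))).
have TI u v : unitI (T u v).
  by do 2?apply: semi_overlap_unitI => //; apply: res_imp_unitI.
have QIP_le C u v : fuzzy_subset C ->
    res_imp O (res_imp O (A u) (B v))
      (res_imp O (res_imp O (As u) (A u)) (res_imp O (As u) (C v))) = 1
    <-> T u v <= C v.
  by move=> CI; apply: res_imp_curry_eq1 => //; apply: res_imp_unitI.
have supT_I : fuzzy_subset (fun v => sup (range (T^~ v))).
  by move=> v; apply: sup_range_unitI u0 _.
split=> // [u v | C CI QC v].
  apply/(QIP_le _ u v supT_I).
  exact: sup_upper_bound (has_sup_range_unitI u0 (TI^~ v)) _ (imageT _ u).
apply: ge_sup => [|_ [u _ <-]]; first by exists (T u0 v), u0.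
exact/(QIP_le _ _ _ CI)/QC.
Qed.
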